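(* Let $0<1/n_0\ll\delta\ll 1$, and let $t,k,n\in\mathbb N$ with $n\geq n_0$ and $k^2-k+2\leq n\leq k^2+k+1$. Let $\mathcal H$ be an $n$-vertex hypergraph with codegree at most $t$ such that $|V(e)|\geq(1-\delta)\sqrt n$ for every edge $e$, and such that $\mathcal H$ has at most $t/(2\delta)$ edges of size at most $k$. If $e\in\mathcal H$ satisfies $|V(e)|\leq k$, then $|N(e)|\leq tn-3$.
   Context: Constant hierarchies: a statement holding whenever $0<a\ll b\le 1$ means there is a non-decreasing function $f:(0,1]\to(0,1]$ such that it holds for all $a,b$ with $a\leq f(b)$; constants are chosen from right to left. A hypergraph $\mathcal H$ has a finite vertex set $V(\mathcal H)$ and a finite set of edges, each edge $e$ with a nonempty set $V(e)\subseteq V(\mathcal H)$ (multiple edges allowed); $n$-vertex means $|V(\mathcal H)|=n$; the size of $e$ is $|V(e)|$. The codegree of $\mathcal H$ is the maximum over distinct vertices $u,v$ of the number of edges containing both. $N(e)$ is the set of edges $f\neq e$ with $V(e)\cap V(f)\neq\emptyset$. *)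

From mathcomp Require Import all_boot all_order all_algebra.
From mathcomp Require Import reals.
Set Implicit Arguments. Unset Strict Implicit. Unset Printing Implicit Defensive.
Import Order.TTheory GRing.Theory Num.Theory.

(* A hypergraph: finite vertex type V, finite edge index type E (multiple
   edges allowed), each edge e with a nonempty vertex set [vs e]. *)
Definition hyper_ok (V E : finType) (vs : E -> {set V}) : Prop :=
  forall e, vs e != set0.

Definition codeg_edges (V E : finType) (vs : E -> {set V}) (u v : V) : {set E} :=
  [set e | (u \in vs e) && (v \in vs e)].

Definition codegree_le (V E : finType) (vs : E -> {set V}) (t : nat) : Prop :=
  forall u v : V, u != v -> #|codeg_edges vs u v| <= t.

Definition nbhd (V E : finType) (vs : E -> {set V}) (e : E) : {set E} :=
  [set f | (f != e) && (vs e :&: vs f != set0)].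

From mathcomp Require Import all_boot all_order all_algebra.
From mathcomp Require Import reals.
From mathcomp Require Import lra zify.
Set Implicit Arguments. Unset Strict Implicit. Unset Printing Implicit Defensive.
Import Order.TTheory GRing.Theory Num.Theory.

(* Double count the pairs (v, f) with v a vertex of e and f an edge through v.
   By the codegree bound, the sum of |f|-1 over the edges f through v is at most
   t(n-1), and e itself contributes |e|-1, so summing over v gives
   sum_{f in N(e)} (|f|-1) <= |e| (t(n-1) - (|e|-1)).  Neighbours of size > k
   contribute at least k each, the at most t/(2 delta) small ones at least
   (1-delta) sqrt n - 1 >= k - 2 delta k; dividing by k, the small ones cost at
   most t, and |e|(|e|-1) >= 3k since |e| >= sqrt n / 2 and k <= sqrt n + 1/2. *)

Section Hypergraph.
Variables (V E : finType) (vs : E -> {set V}) (t : nat).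
Hypothesis codeg : codegree_le vs t.

Lemma star_weight_le v : \sum_(f | v \in vs f) (#|vs f| - 1) <= t * (#|V| - 1).
Proof.
have -> : \sum_(f | v \in vs f) (#|vs f| - 1) =
          \sum_(f | v \in vs f) \sum_(u | u != v) (u \in vs f : nat).
  apply: eq_bigr => f vf.
  rewrite (cardsD1 v (vs f)) vf add1n subn1 -sum1_card big_mkcond [RHS]big_mkcond /=.
  by apply: eq_bigr => u _; rewrite !inE andbC; case: (u \in vs f); case: (u != v).
rewrite (exchange_big_dep (fun u => u != v)) //= mulnC subn1 -(cardsC1 v) -sum_nat_const.
rewrite [X in _ <= X](eq_bigl (fun u => u != v)) => [|u]; last by rewrite !inE.
apply: leq_sum => u uv; apply: leq_trans _ (codeg uv).
rewrite -sum1_card [X in _ <= X]big_mkcond [X in X <= _]big_mkcond /=.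
by apply: leq_sum => f _; rewrite inE uv andbT; case: (u \in vs f); case: (v \in vs f).
Qed.

Lemma nbhd_weight_le e :
  \sum_(f in nbhd vs e) (#|vs f| - 1) + #|vs e| * (#|vs e| - 1)
    <= #|vs e| * (t * (#|V| - 1)).
Proof.
set w := fun f => #|vs f| - 1.
have cover : \sum_(f in nbhd vs e) w f <=
    \sum_(v in vs e) \sum_(f | (v \in vs f) && (f != e)) w f.
  rewrite (exchange_big_dep (fun f => f != e)) /=; last by move=> v f _ /andP[].
  rewrite [X in _ <= X](bigID (mem (nbhd vs e))) /=; apply: leq_trans (leq_addr _ _).
  rewrite [X in _ <= X](eq_bigl (mem (nbhd vs e))) => [|f]; last first.
    by apply: andb_idl; rewrite inE => /andP[].
  apply: leq_sum => f; rewrite inE => /andP[fe /set0Pn[x]].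
  by rewrite inE => /andP[xe xf]; rewrite (bigD1 x) ?xe ?xf ?fe //= leq_addr.
apply: leq_trans (leq_add cover (leqnn _)) _.
rewrite -!sum_nat_const -big_split /=; apply: leq_sum => v ve.
by apply: leq_trans (star_weight_le v); rewrite [X in _ <= X](bigD1 e) //= addnC.
Qed.

End Hypergraph.

Local Open Scope ring_scope.

Lemma nbhd_weight_ler (R : numDomainType) (V E : finType) (vs : E -> {set V})
    (t : nat) e :
  codegree_le vs t -> hyper_ok vs ->
  \sum_(f in nbhd vs e) (#|vs f|%:R - 1 : R) + #|vs e|%:R * (#|vs e|%:R - 1)
    <= #|vs e|%:R * (t%:R * (#|V|%:R - 1)).
Proof.
move=> codeg vs_ok; have edge_gt0 f : (0 < #|vs f|)%N by rewrite card_gt0 vs_ok.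
have V_gt0 : (0 < #|V|)%N by apply: leq_trans (edge_gt0 e) (max_card _).
have -> : \sum_(f in nbhd vs e) (#|vs f|%:R - 1 : R) =
          (\sum_(f in nbhd vs e) (#|vs f| - 1))%:R.
  by rewrite natr_sum; apply: eq_bigr => f _; rewrite natrB ?edge_gt0.
move: (nbhd_weight_le codeg e).
by rewrite -(ler_nat R) natrD !natrM !natrB ?edge_gt0.
Qed.

Lemma ler_sum_setID (R : numDomainType) (T : finType) (A B : {set T})
    (F : T -> R) (a b : R) :
  (forall x, x \in A :&: B -> a <= F x) -> (forall x, x \in A :\: B -> b <= F x) ->
  a * #|A :&: B|%:R + b * #|A :\: B|%:R <= \sum_(x in A) F x.
Proof.
move=> inB notinB; rewrite (big_setID B) /= !mulr_natr -!sumr_const.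
by apply: lerD; apply: ler_sum.
Qed.

Lemma nbhd_count_arith (R : realFieldType) (d r n k m t L S : R) :
  r * r = n -> 0 < d -> d <= 1/2 -> 16 <= d * r -> 2 * k - 1 <= 2 * r -> r <= k + 1 ->
  (1 - d) * r <= m -> m <= k -> 0 <= t -> 0 <= L -> 0 <= S -> 2 * d * S <= t ->
  k * L + ((1 - d) * r - 1) * S + m * (m - 1) <= m * (t * (n - 1)) ->
  L + S <= t * n - 3.
Proof.
move=> <- d_gt0 d_le dr kr rk rm mk t_ge0 L_ge0 S_ge0 St count.
have r_ge32 : 32 <= r by nra.
have k_gt0 : 0 < k by nra.
have small_excess : (k - (1 - d) * r + 1) * S <= k * t.
  have [neg|pos] := ltrP (k - (1 - d) * r + 1) 0; first by nra.
  have : (k - (1 - d) * r + 1) * S <= 2 * d * k * S by apply: ler_wpM2r => //; nra.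
  have : k * (2 * d * S) <= k * t by apply: ler_wpM2l => //; nra.
  lra.
have e_cost : 3 * k <= m * (m - 1).
  have half_r : r / 2 <= m by nra.
  have : (r / 2) * (r / 2 - 1) <= m * (m - 1) by nra.
  nra.
have m_weight : m * (t * (r * r - 1)) <= k * (t * (r * r - 1))
  by apply: ler_wpM2r => //; apply: mulr_ge0 => //; nra.
rewrite -(ler_pM2l k_gt0); nra.
Qed.

Lemma sqrt_nat_bounds (R : rcfType) (k n : nat) :
  (k * k - k + 2 <= n)%N -> (n <= k * k + k + 1)%N ->
  2 * k%:R - 1 <= 2 * Num.sqrt (n%:R : R) /\ Num.sqrt (n%:R : R) <= k%:R + 1.
Proof.
move=> lo hi; set r := Num.sqrt _.
have r_ge0 : 0 <= r by apply: sqrtr_ge0.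
have rr : r * r = n%:R by rewrite -expr2 sqr_sqrtr ?ler0n.
have loR : k%:R * k%:R + 2 <= n%:R + k%:R :> R.
  have : (k * k + 2 <= n + k)%N by lia.
  by rewrite -(ler_nat R) !natrD natrM.
have hiR : n%:R <= k%:R * k%:R + k%:R + 1 :> R.
  by move: hi; rewrite -(ler_nat R) !natrD natrM.
have k_ge0 : 0 <= k%:R :> R by [].
split; nra.
Qed.

Lemma mulr_sqrt_ge16 (R : rcfType) (d : R) (n0 n : nat) :
  0 < d -> (0 < n0)%N -> (n0 <= n)%N -> n0%:R^-1 <= d ^+ 2 / 256 ->
  16 <= d * Num.sqrt (n%:R : R).
Proof.
move=> d_gt0 n0_gt0 n0n inv_le; set r := Num.sqrt _.
have r_ge0 : 0 <= r by apply: sqrtr_ge0.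
have rr : r * r = n%:R by rewrite -expr2 sqr_sqrtr ?ler0n.
have n0_le : n0%:R <= n%:R :> R by rewrite ler_nat.
have n0_gt0R : 0 < n0%:R :> R by rewrite ltr0n.
have : 1 <= n0%:R * (d ^+ 2 / 256).
  by rewrite -[X in X <= _](mulfV (lt0r_neq0 n0_gt0R)); exact: ler_wpM2l.
have : 0 <= d * r by apply: mulr_ge0 => //; exact: ltW.
nra.
Qed.

Theorem proposition4p5 (R : realType) :
  exists delta0 : R, 0 < delta0 <= 1 /\
  exists f : R -> R,
    (forall x, 0 < x <= 1 -> 0 < f x <= 1) /\
    (forall x y, 0 < x <= y -> y <= 1 -> f x <= f y) /\
  forall delta : R, 0 < delta <= delta0 ->
  forall n0 : nat, (0 < n0)%N -> (n0%:R)^-1 <= f delta ->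
  forall (t k n : nat), (n0 <= n)%N ->
    (k * k - k + 2 <= n)%N -> (n <= k * k + k + 1)%N ->
  forall (V E : finType) (vs : E -> {set V}),
    #|V| = n -> hyper_ok vs ->
    codegree_le vs t ->
    (forall e, (1 - delta) * Num.sqrt (n%:R) <= (#|vs e|)%:R) ->
    (#|[set e | (#|vs e| <= k)%N]|)%:R <= t%:R / (2 * delta) ->
  forall e : E, (#|vs e| <= k)%N ->
    (#|nbhd vs e|)%:R <= (t * n)%:R - 3 :> R.
Proof.
exists (1 / 2); split; first lra.
exists (fun x => x ^+ 2 / 256); split; first by move=> x /andP[x_gt0 x_le1]; nra.
split; first by move=> x y /andP[x_gt0 xy] y_le1; nra.
move=> d /andP[d_gt0 d_le] n0 n0_gt0 n0_le t k n n0n lo hi V E vs Vn vs_ok codeg.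
move=> size_ge small_le e e_small.
set r := Num.sqrt (n%:R : R).
have rr : r * r = n%:R by rewrite -expr2 sqr_sqrtr ?ler0n.
have [kr rk] := sqrt_nat_bounds R lo hi.
set large := [set f | (k < #|vs f|)%N].
have small_nbhd : (#|nbhd vs e :\: large| <= #|[set f | (#|vs f| <= k)%N]|)%N.
  by apply/subset_leq_card/subsetP => f; rewrite !inE -leqNgt => /andP[].
rewrite -(cardsID large (nbhd vs e)) natrD natrM.
apply: (nbhd_count_arith rr d_gt0 d_le (mulr_sqrt_ge16 d_gt0 n0_gt0 n0n n0_le) kr rk
  (size_ge e)); rewrite ?ler0n ?ler_nat //.
- rewrite mulrC -ler_pdivlMr ?mulr_gt0 //; apply: le_trans small_le.
  by rewrite ler_nat small_nbhd.
- move: (nbhd_weight_ler R e codeg vs_ok); rewrite Vn; apply: le_trans.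
  rewrite lerD2r; apply: ler_sum_setID => f; rewrite !inE.
    by move=> /andP[_ f_large]; rewrite lerBrDr natr1 ler_nat.
  by move=> _; rewrite lerD2r; exact: size_ge.
Qed.
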